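(* Let $\sigma:\mathbb{R}\to\mathbb{R}$ be a differentiable activation function for which there is a constant $c_\sigma>0$ such that for any $L'$-Lipschitz $h:\mathbb{R}\to\mathbb{R}$ that is constant outside $[-R,R]$ and any $\delta>0$, there exist reals $a,(\alpha_i,\beta_i,\gamma_i)_{i=1}^m$ with $m\le c_\sigma RL'/\delta$ and $\sup_{x\in\mathbb{R}}|a+\sum_{i=1}^m\alpha_i\sigma(\beta_ix+\gamma_i)-h(x)|\le\delta$. Then: 1. For any $M>0$ and $\delta>0$ there exists a 2-layer neural net $g:\mathbb{R}^2\to\mathbb{R}$ of size $m\le 8c_\sigma M^2/\delta+1$ such that $\sup_{x,y\in[-M,M]}|g(x,y)-xy|\le\delta$. 2. For any $0<a\le b<\infty$ and $\delta>0$ there exists a 2-layer neural net $q:\mathbb{R}\to\mathbb{R}$ of size $m\le c_\sigma\frac{b}{a^2\delta}+1$ such that $\sup_{x\in[a,b]}|q(x)-1/x|\le\delta$.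
   Context: A 2-layer neural net with activation $\sigma$ of size $m+1$ is a function of the form $x\mapsto a+\sum_{i=1}^m\alpha_i\sigma(w_i^\top x+\gamma_i)$ (the constant $a$ counting as one node). *)

From Stdlib Require Export Reals List.
Export ListNotations.
Open Scope R_scope.

(* Its size is (length ps) + 1 (the constant a counting as one node). *)
Definition net1 (sigma : R -> R) (a : R) (ps : list (R * R * R)) (x : R) : R :=
  a + fold_right (fun p acc => let '(al, be, ga) := p in
                               al * sigma (be * x + ga) + acc) 0 ps.

Definition net2 (sigma : R -> R) (a : R) (ps : list (R * R * R * R)) (x y : R) : R :=
  a + fold_right (fun p acc => let '(al, w1, w2, ga) := p in
                               al * sigma (w1 * x + w2 * y + ga) + acc) 0 ps.

Definition lipschitz (L : R) (h : R -> R) : Prop :=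
  forall x y, Rabs (h x - h y) <= L * Rabs (x - y).

Definition const_outside (Rr : R) (h : R -> R) : Prop :=
  (forall x, x <= - Rr -> h x = h (- Rr)) /\ (forall x, Rr <= x -> h x = h Rr).

Definition approx_property (sigma : R -> R) (c : R) : Prop :=
  forall (L Rr : R) (h : R -> R), 0 < Rr -> 0 <= L ->
    lipschitz L h -> const_outside Rr h ->
    forall delta, 0 < delta ->
      exists (a : R) (ps : list (R * R * R)),
        INR (length ps) <= c * Rr * L / delta /\
        forall x, Rabs (net1 sigma a ps x - h x) <= delta.

(* Both functions are restricted to a compact interval by clamping the argument,
   which makes them Lipschitz on all of R and constant far out, so the hypothesis
   on sigma applies. For 1/x on [a, b] the Lipschitz constant is 1/a^2. For the
   product, the polarization identity xy = (x+y)^2/4 - (x-y)^2/4 reduces the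
   problem to one approximation of t^2/4 on [-2M, 2M] (Lipschitz constant M),
   used once along the direction (1, 1) and once, negated, along (1, -1). *)

From Stdlib Require Import Reals List Lra.
Open Scope R_scope.

Definition clamp (lo hi t : R) : R := Rmax lo (Rmin t hi).

Lemma clamp_nonexpansive lo hi s t :
  lo <= hi -> Rabs (clamp lo hi s - clamp lo hi t) <= Rabs (s - t).
Proof.
  intros Hlohi; unfold clamp, Rmax, Rmin.
  repeat destruct Rle_dec; unfold Rabs; repeat destruct Rcase_abs; lra.
Qed.

Lemma clamp_in lo hi t : lo <= hi -> lo <= clamp lo hi t <= hi.
Proof. intros Hlohi; unfold clamp, Rmax, Rmin; repeat destruct Rle_dec; lra. Qed.

Lemma clamp_id lo hi t : lo <= t <= hi -> clamp lo hi t = t.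
Proof. intros Ht; unfold clamp, Rmax, Rmin; repeat destruct Rle_dec; lra. Qed.

Lemma clamp_left lo hi t : lo <= hi -> t <= lo -> clamp lo hi t = lo.
Proof. intros Hlohi Ht; unfold clamp, Rmax, Rmin; repeat destruct Rle_dec; lra. Qed.

Lemma clamp_right lo hi t : lo <= hi -> hi <= t -> clamp lo hi t = hi.
Proof. intros Hlohi Ht; unfold clamp, Rmax, Rmin; repeat destruct Rle_dec; lra. Qed.

Lemma lipschitz_clamp_comp lo hi L (g : R -> R) :
  lo <= hi -> 0 <= L ->
  (forall u v, lo <= u <= hi -> lo <= v <= hi -> Rabs (g u - g v) <= L * Rabs (u - v)) ->
  lipschitz L (fun t => g (clamp lo hi t)).
Proof.
  intros Hlohi HL Hg s t.
  eapply Rle_trans; [apply Hg; apply clamp_in; exact Hlohi |].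
  apply Rmult_le_compat_l; [exact HL | apply clamp_nonexpansive; exact Hlohi].
Qed.

Lemma const_outside_clamp_comp Rr lo hi (g : R -> R) :
  - Rr <= lo -> lo <= hi -> hi <= Rr -> const_outside Rr (fun t => g (clamp lo hi t)).
Proof.
  intros Hlo Hlohi Hhi; split; intros x Hx.
  - rewrite !(clamp_left lo hi) by lra; reflexivity.
  - rewrite !(clamp_right lo hi) by lra; reflexivity.
Qed.

Lemma quarter_square_lipschitz_on M u v :
  - (2 * M) <= u <= 2 * M -> - (2 * M) <= v <= 2 * M ->
  Rabs (u ^ 2 / 4 - v ^ 2 / 4) <= M * Rabs (u - v).
Proof.
  intros Hu Hv.
  replace (u ^ 2 / 4 - v ^ 2 / 4) with ((u + v) / 4 * (u - v)) by field.
  rewrite Rabs_mult.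
  apply Rmult_le_compat_r; [apply Rabs_pos | apply Rabs_le; lra].
Qed.

Lemma inv_lipschitz_on a u v :
  0 < a -> a <= u -> a <= v -> Rabs (1 / u - 1 / v) <= 1 / a ^ 2 * Rabs (u - v).
Proof.
  intros Ha Hu Hv.
  replace (1 / u - 1 / v) with (/ (u * v) * - (u - v)) by (field; lra).
  rewrite Rabs_mult, Rabs_Ropp, (Rabs_right (/ (u * v))).
  - apply Rmult_le_compat_r; [apply Rabs_pos |].
    unfold Rdiv; rewrite Rmult_1_l.
    apply Rinv_le_contravar; [apply pow_lt; lra | simpl; nra].
  - apply Rle_ge, Rlt_le, Rinv_0_lt_compat; nra.
Qed.

Definition along (w1 w2 : R) (ps : list (R * R * R)) : list (R * R * R * R) :=
  map (fun p : R * R * R => let '(al, be, ga) := p in (al, be * w1, be * w2, ga)) ps.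

Definition opp_net (ps : list (R * R * R)) : list (R * R * R) :=
  map (fun p : R * R * R => let '(al, be, ga) := p in (- al, be, ga)) ps.

Lemma net2_app sigma a1 a2 ps1 ps2 x y :
  net2 sigma (a1 + a2) (ps1 ++ ps2) x y = net2 sigma a1 ps1 x y + net2 sigma a2 ps2 x y.
Proof.
  unfold net2; rewrite fold_right_app.
  induction ps1 as [|[[[al w1] w2] ga] ps1 IH]; simpl.
  - ring.
  - lra.
Qed.

Lemma net2_along sigma a w1 w2 ps x y :
  net2 sigma a (along w1 w2 ps) x y = net1 sigma a ps (w1 * x + w2 * y).
Proof.
  unfold net1, net2; induction ps as [|[[al be] ga] ps IH]; simpl.
  - reflexivity.
  - replace (be * w1 * x + be * w2 * y + ga) with (be * (w1 * x + w2 * y) + ga) by ring.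
    lra.
Qed.

Lemma net1_opp sigma a ps t : net1 sigma (- a) (opp_net ps) t = - net1 sigma a ps t.
Proof.
  unfold net1; induction ps as [|[[al be] ga] ps IH]; simpl.
  - ring.
  - lra.
Qed.

Lemma net2_polarization sigma a ps x y :
  net2 sigma (a + - a) (along 1 1 ps ++ along 1 (-1) (opp_net ps)) x y
  = net1 sigma a ps (x + y) - net1 sigma a ps (x - y).
Proof.
  rewrite net2_app, !net2_along, net1_opp.
  replace (1 * x + 1 * y) with (x + y) by ring.
  replace (1 * x + -1 * y) with (x - y) by ring.
  ring.
Qed.

Lemma product_approx sigma c M delta :
  approx_property sigma c -> 0 < M -> 0 < delta ->
  exists (a : R) (ps : list (R * R * R * R)),
    INR (length ps) <= 8 * c * M ^ 2 / delta /\
    forall x y, - M <= x <= M -> - M <= y <= M ->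
      Rabs (net2 sigma a ps x y - x * y) <= delta.
Proof.
  intros Happ HM Hdelta.
  set (h := fun t => clamp (- (2 * M)) (2 * M) t ^ 2 / 4).
  assert (Hlip : lipschitz M h)
    by (apply (lipschitz_clamp_comp _ _ M (fun u => u ^ 2 / 4));
        [lra | lra | apply quarter_square_lipschitz_on]).
  assert (Hconst : const_outside (2 * M) h)
    by (apply (const_outside_clamp_comp _ _ _ (fun u => u ^ 2 / 4)); lra).
  destruct (Happ M (2 * M) h ltac:(lra) ltac:(lra) Hlip Hconst (delta / 2) ltac:(lra))
    as [a [ps [Hsize Herr]]].
  exists (a + - a), (along 1 1 ps ++ along 1 (-1) (opp_net ps)); split.
  - unfold along, opp_net; rewrite length_app, !length_map, plus_INR.
    replace (8 * c * M ^ 2 / delta) with (2 * (c * (2 * M) * M / (delta / 2)))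
      by (field; lra).
    lra.
  - intros x y Hx Hy.
    rewrite net2_polarization.
    assert (Hh : h (x + y) - h (x - y) = x * y)
      by (unfold h; rewrite !clamp_id by lra; field).
    replace (net1 sigma a ps (x + y) - net1 sigma a ps (x - y) - x * y)
      with ((net1 sigma a ps (x + y) - h (x + y)) + - (net1 sigma a ps (x - y) - h (x - y)))
      by lra.
    eapply Rle_trans; [apply Rabs_triang |].
    rewrite Rabs_Ropp.
    pose proof (Herr (x + y)); pose proof (Herr (x - y)); lra.
Qed.

Lemma reciprocal_approx sigma c a b delta :
  approx_property sigma c -> 0 < a -> a <= b -> 0 < delta ->
  exists (a0 : R) (ps : list (R * R * R)),
    INR (length ps) <= c * b / (a ^ 2 * delta) /\
    forall x, a <= x <= b -> Rabs (net1 sigma a0 ps x - 1 / x) <= delta.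
Proof.
  intros Happ Ha Hab Hdelta.
  assert (Ha2 : 0 < a ^ 2) by (apply pow_lt; lra).
  set (h := fun t => 1 / clamp a b t).
  assert (Hlip : lipschitz (1 / a ^ 2) h).
  { apply (lipschitz_clamp_comp _ _ _ (fun u => 1 / u)); [lra | apply Rlt_le, Rdiv_lt_0_compat; lra |].
    intros u v Hu Hv; apply inv_lipschitz_on; lra. }
  assert (Hconst : const_outside b h)
    by (apply (const_outside_clamp_comp _ _ _ (fun u => 1 / u)); lra).
  destruct (Happ (1 / a ^ 2) b h ltac:(lra) ltac:(apply Rlt_le, Rdiv_lt_0_compat; lra)
              Hlip Hconst delta Hdelta)
    as [a0 [ps [Hsize Herr]]].
  exists a0, ps; split.
  - replace (c * b / (a ^ 2 * delta)) with (c * b * (1 / a ^ 2) / delta) by (field; lra).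
    exact Hsize.
  - intros x Hx.
    replace (1 / x) with (h x) by (unfold h; rewrite clamp_id by lra; reflexivity).
    apply Herr.
Qed.

Theorem lemma8 (sigma : R -> R) (c : R) :
  derivable sigma -> 0 < c -> approx_property sigma c ->
  (forall M delta, 0 < M -> 0 < delta ->
     exists (a : R) (ps : list (R * R * R * R)),
       INR (length ps) + 1 <= 8 * c * M ^ 2 / delta + 1 /\
       forall x y, -M <= x <= M -> -M <= y <= M ->
         Rabs (net2 sigma a ps x y - x * y) <= delta)
  /\
  (forall a b delta, 0 < a -> a <= b -> 0 < delta ->
     exists (a0 : R) (ps : list (R * R * R)),
       INR (length ps) + 1 <= c * b / (a ^ 2 * delta) + 1 /\
       forall x, a <= x <= b -> Rabs (net1 sigma a0 ps x - 1 / x) <= delta).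
Proof.
  intros _ _ Happ; split.
  - intros M delta HM Hdelta.
    destruct (product_approx sigma c M delta Happ HM Hdelta) as [a [ps [Hsize Herr]]].
    exists a, ps; split; [lra | exact Herr].
  - intros a b delta Ha Hab Hdelta.
    destruct (reciprocal_approx sigma c a b delta Happ Ha Hab Hdelta)
      as [a0 [ps [Hsize Herr]]].
    exists a0, ps; split; [lra | exact Herr].
Qed.
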